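(* Let $G$ be a connected graph, let $\sigma$ be a BFS ordering of $G$ with $\mathcal{F}$-tree $T_\sigma$, and let $S$ be the set of the first $k$ internal vertices of $T_\sigma$ (with respect to the order $\sigma$). Let $\rho'$ be the ordering of $S$ induced by $\sigma$, let $\rho$ be any ordering of $V(G)$ that starts with $\rho'$, let $\tau$ be the $\mathrm{BFS}^+_\rho$ ordering of $G$, and let $T_\tau$ be the $\mathcal{F}$-tree of $\tau$. Then every $v\in S$ has the same set of children in $T_\sigma$ as in $T_\tau$.
   Context: All graphs are finite, simple, undirected, connected and non-empty. A BFS ordering is produced by breadth-first search with a queue: choose a start vertex, mark it visited and enqueue it; repeatedly dequeue the front vertex $v$ and enqueue all unvisited neighbors of $v$ in some order, marking them visited; the ordering is the visiting order. Given a linear ordering $\rho$ of $V(G)$, the $\mathrm{BFS}^+_\rho$ ordering is the BFS ordering in which every tie is broken by $\rho$: the start vertex is the first vertex of $\rho$, and whenever the unvisited neighbors of a dequeued vertex are enqueued, they are enqueued in the order in which they appear in $\rho$. The $\mathcal{F}$-tree of an ordering $(v_1,\dots,v_n)$ is the spanning tree rooted at $v_1$ in which the parent of $v_i$ ($i>1$) is its leftmost neighbor in the ordering. A leaf is a non-root vertex without children; all other vertices, including the root, are internal. *)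

(* A simple graph on a finite vertex type T is a symmetric,
   irreflexive boolean relation e : rel T. *)
From mathcomp Require Import all_boot.
Set Implicit Arguments. Unset Strict Implicit. Unset Printing Implicit Defensive.

Section BFS.
Variables (T : finType) (e : rel T).

Definition is_ordering (s : seq T) : Prop := uniq s /\ forall x : T, x \in s.

(* A state is (visited, queue); [visited] lists the
   visited vertices in visiting order.  A step dequeues the front vertex v and
   enqueues the list l of its unvisited neighbours, in an order allowed by the
   policy P v visited l, marking them visited. [bfs_run P s q out] : starting
   from visited s and queue q, the search terminates with visiting order out. *)
Inductive bfs_run (P : T -> seq T -> seq T -> Prop) :
    seq T -> seq T -> seq T -> Prop :=
| bfs_done s : bfs_run P s [::] s
| bfs_step v q s l out :
    P v s l -> bfs_run P (s ++ l) (q ++ l) out -> bfs_run P s (v :: q) out.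

Definition free_policy (v : T) (s l : seq T) : Prop :=
  uniq l /\ l =i [pred u | e v u && (u \notin s)].

(* BFS^+_rho: ties broken by rho. *)
Definition plus_policy (rho : seq T) (v : T) (s l : seq T) : Prop :=
  l = [seq u <- rho | e v u && (u \notin s)].

Definition is_bfs_ordering (sigma : seq T) : Prop :=
  exists x : T, bfs_run free_policy [:: x] [:: x] sigma.

Definition is_bfsplus (rho tau : seq T) : Prop :=
  exists (x : T) (rest : seq T),
    rho = x :: rest /\ bfs_run (plus_policy rho) [:: x] [:: x] tau.

(* F-tree of an ordering sigma = (v1,...,vn): rooted at v1; the parent of
   v_i (i > 1) is its leftmost neighbour in the ordering. *)
Definition froot (sigma : seq T) : option T := ohead sigma.

Definition fparent (sigma : seq T) (v : T) : option T :=
  if froot sigma == Some v then None else ohead [seq u <- sigma | e v u].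

Definition fchildren (sigma : seq T) (u : T) : {set T} :=
  [set v | (v \in sigma) && (fparent sigma v == Some u)].

Definition finternal (sigma : seq T) (u : T) : bool :=
  (froot sigma == Some u) || (fchildren sigma u != set0).

Definition first_internal (sigma : seq T) (k : nat) : seq T :=
  take k [seq u <- sigma | finternal sigma u].

End BFS.

From Pilot Require Import Defs.
From mathcomp Require Import all_boot.
Set Implicit Arguments. Unset Strict Implicit. Unset Printing Implicit Defensive.

(* In every BFS, the vertices enqueued when [v] is dequeued are exactly the
   children of [v] in the F-tree of the resulting ordering, and the F-tree
   parents of a BFS ordering are monotone.  Let [sigma] be produced by a BFS
   and [S] be its first internal vertices.  The BFS^+_rho run keeps the queued
   vertices of [S] in [sigma]-order, each preceded only by vertices earlier in
   [sigma].  Between two consecutive vertices of [S] it therefore only dequeues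
   leaves of T_sigma that come before the next vertex [z] of [S] in [sigma];
   all neighbours of such a leaf are already visited, so nothing is enqueued.
   Hence when [z] is dequeued the visited set is the root together with the
   vertices whose [sigma]-parent precedes [z], exactly as in the BFS producing
   [sigma], and [z] enqueues exactly its children in T_sigma. *)

Section SeqFacts.
Variables (T : eqType) (p : pred T).

Lemma ohead_filter_mem s u : ohead (filter p s) = Some u -> p u && (u \in s).
Proof.
by case E: (filter p s) => [|a t] //= [<-]; rewrite -mem_filter E mem_head.
Qed.

Lemma ohead_filter_index s u w :
  ohead (filter p s) = Some u -> p w -> w \in s -> index u s <= index w s.
Proof.
elim: s => [|c s IH] //=; case pc: (p c) => /=; first by move=> [->]; rewrite eqxx.
move=> Hu pw.
rewrite in_cons => /orP[/eqP wc|ws]; first by rewrite -wc pw in pc.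
have /andP[pu _] := ohead_filter_mem Hu.
have cu : c != u by apply: contraFneq pc => ->.
have cw : c != w by apply: contraFneq pc => ->.
by rewrite (negbTE cu) (negbTE cw) ltnS; apply: IH.
Qed.

Lemma ohead_filter_has s w : p w -> w \in s -> exists u, ohead (filter p s) = Some u.
Proof.
move=> pw ws; have : w \in filter p s by rewrite mem_filter pw.
by case: (filter p s) => // u t _; exists u.
Qed.

Lemma index_filter_le s a b : a \in s -> b \in s -> p a -> p b ->
  index a s <= index b s -> index a (filter p s) <= index b (filter p s).
Proof.
elim: s => [|c s IH] //=; rewrite !in_cons.
case: (eqVneq c a) => [<-|ca]; first by move=> _ _ -> _ _ /=; rewrite eqxx.
case: (eqVneq c b) => [<-|cb] //= as_ bs pa pb; rewrite ltnS => le_ab.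
by case: (p c) => /=; rewrite ?(negbTE ca) ?(negbTE cb) ?ltnS; apply: IH.
Qed.

End SeqFacts.

Lemma index_cat_lt (T : eqType) (s l : seq T) a b :
  a \in s -> b \notin s -> index a (s ++ l) < index b (s ++ l).
Proof.
move=> as_ bs; rewrite !index_cat as_ (negbTE bs).
by apply: leq_trans (leq_addr _ _); rewrite index_mem.
Qed.

Lemma uniq_pairwise_index (T : eqType) (s : seq T) :
  uniq s -> pairwise (fun a b => index a s < index b s) s.
Proof.
case: s => [|y t] // us; apply/(pairwiseP y) => i j hi hj hij.
by rewrite !index_uniq.
Qed.

Lemma ohead_cat (T : eqType) (s r : seq T) : s != [::] -> ohead (s ++ r) = ohead s.
Proof. by case: s. Qed.

Lemma ohead_prefix (T : eqType) (s r : seq T) :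
  prefix s r -> s != [::] -> ohead r = ohead s.
Proof. by case/prefixP=> t ->; case: s. Qed.

Section BfsTree.
Variables (T : finType) (e : rel T).
Hypothesis e_sym : symmetric e.

Lemma bfs_run_prefix (P : T -> seq T -> seq T -> Prop) s q out :
  bfs_run P s q out -> exists r, out = s ++ r.
Proof.
elim=> [s0|v q0 s0 l out0 _ _ [r ->]]; first by exists [::]; rewrite cats0.
by exists (l ++ r); rewrite catA.
Qed.

Lemma fparent_some s b w :
  fparent e s b = Some w -> [/\ e b w, w \in s & Defs.froot s != Some b].
Proof. by rewrite /fparent; case: ifP => // /negbT ? /ohead_filter_mem/andP[]. Qed.

Lemma fparent_root s x : ohead s = Some x -> fparent e s x = None.
Proof. by rewrite /fparent /Defs.froot => ->; rewrite eqxx. Qed.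

Lemma fparent_neq_root s x b w : ohead s = Some x -> fparent e s b = Some w -> b != x.
Proof. by move=> hs Hb; apply/eqP => bx; rewrite bx fparent_root in Hb. Qed.

Lemma fparent_cat s r b w :
  s != [::] -> fparent e s b = Some w -> fparent e (s ++ r) b = Some w.
Proof.
move=> s0; rewrite /fparent /Defs.froot ohead_cat //; case: ifP => // _.
by rewrite filter_cat; case: (filter _ _).
Qed.

Definition parent_monotone (s : seq T) : Prop :=
  forall a b pa pb, a \in s -> b \in s ->
    fparent e s a = Some pa -> fparent e s b = Some pb ->
    index pa s < index pb s -> index a s < index b s.

Variable x : T.

(* The state of a BFS from [x]: the visited list is [d ++ q], where [d] lists
   the dequeued vertices and [q] is the queue. *)
Record bfs_inv (d q : seq T) : Prop := BfsInv {
  bfs_uniq : uniq (d ++ q);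
  bfs_head : ohead (d ++ q) = Some x;
  bfs_closed : forall w n, w \in d -> e w n -> n \in d ++ q;
  bfs_parent : forall b, b \in d ++ q -> b != x ->
    exists2 w, w \in d & fparent e (d ++ q) b = Some w /\
                         index w (d ++ q) < index b (d ++ q);
  bfs_mono : parent_monotone (d ++ q) }.

Lemma bfs_inv_init : bfs_inv [::] [:: x].
Proof.
split=> //= [b|a b pa pb]; rewrite inE => /eqP->; first by rewrite eqxx.
by rewrite fparent_root.
Qed.

Section Step.
Variables (d q l : seq T) (v : T).
Local Notation s := (d ++ v :: q).
Hypotheses (inv : bfs_inv d (v :: q)) (Hl : free_policy e v s l).

Let mem_l n : (n \in l) = e v n && (n \notin s).
Proof. by case: Hl => _ ->; rewrite inE. Qed.

Let s_nil : s != [::].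
Proof. by case: (d). Qed.

Let head_sl : ohead (s ++ l) = Some x.
Proof. by rewrite ohead_cat // (bfs_head inv). Qed.

Let x_in_s : x \in s.
Proof. by have := bfs_head inv; case: (s) => // y t [<-]; rewrite mem_head. Qed.

Let v_notin_d : v \notin d.
Proof.
by have := bfs_uniq inv; rewrite cat_uniq => /and3P[_ /hasPn/(_ v (mem_head _ _))].
Qed.

Lemma step_parent_new b : b \in l -> fparent e (s ++ l) b = Some v.
Proof.
rewrite mem_l => /andP[evb bs].
have bx : b != x by apply: contraNneq bs => ->; apply: x_in_s.
rewrite /fparent /Defs.froot head_sl (inj_eq Some_inj) eq_sym (negbTE bx).
rewrite -catA filter_cat (@eq_in_filter _ _ pred0) ?filter_pred0 /=.
  by rewrite e_sym evb.
move=> w wd /=; apply: contraNF bs => ebw.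
by apply: (bfs_closed inv wd); rewrite e_sym.
Qed.

Lemma step_parent_old b : b \in s -> fparent e (s ++ l) b = fparent e s b.
Proof.
move=> bs; case: (eqVneq b x) => [->|bx].
  by rewrite !fparent_root // (bfs_head inv).
by have [w _ [Hw _]] := bfs_parent inv bs bx; rewrite Hw (fparent_cat _ s_nil Hw).
Qed.

Let v_in_s : v \in s.
Proof. by rewrite mem_cat mem_head orbT. Qed.

Let index_sl y : y \in s -> index y (s ++ l) = index y s.
Proof. by rewrite index_cat => ->. Qed.

Let index_d w : w \in d -> index w s < size d.
Proof. by move=> wd; rewrite index_cat wd index_mem. Qed.

Let index_v : index v s = size d.
Proof. by rewrite index_cat (negbTE v_notin_d) /= eqxx addn0. Qed.

Let parent_in_d b w : b \in s -> fparent e s b = Some w -> w \in d.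
Proof.
move=> bs Hb; have bx := fparent_neq_root (bfs_head inv) Hb.
by have [w' w'd [Hw' _]] := bfs_parent inv bs bx; move: Hb; rewrite Hw' => -[<-].
Qed.

Lemma step_parent_monotone : parent_monotone (s ++ l).
Proof.
have notin_s b : b \in l -> b \notin s by rewrite mem_l => /andP[].
move=> a b pa pb; rewrite (mem_cat a s) (mem_cat b s) => /orP[as_|al] /orP[bs|bl].
- rewrite !step_parent_old // => Ha Hb.
  have [_ pas _] := fparent_some Ha; have [_ pbs _] := fparent_some Hb.
  by rewrite !index_sl //; apply: (bfs_mono inv).
- by move=> *; apply: index_cat_lt => //; apply: notin_s.
- rewrite step_parent_new // step_parent_old // => -[<-] Hb.
  have [_ pbs _] := fparent_some Hb; have pbd := parent_in_d bs Hb.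
  rewrite (index_sl v_in_s) (index_sl pbs) index_v.
  by move=> /(ltn_trans (index_d pbd)); rewrite ltnn.
- by rewrite !step_parent_new // => -[<-] [<-]; rewrite ltnn.
Qed.

Lemma bfs_inv_step : bfs_inv (rcons d v) (q ++ l).
Proof.
have E : rcons d v ++ (q ++ l) = s ++ l by rewrite cat_rcons -catA.
split; rewrite E //.
- rewrite cat_uniq (bfs_uniq inv) (proj1 Hl) andbT /=.
  by apply/hasPn => n; rewrite mem_l => /andP[].
- move=> w n; rewrite mem_rcons in_cons (mem_cat n s) => /orP[/eqP-> evn|wd ewn].
    by rewrite mem_l evn orbN.
  by rewrite (bfs_closed inv wd ewn).
- move=> b; rewrite (mem_cat b s) => /orP[bs|bl] bx.
    have [w wd [Hw lt_wb]] := bfs_parent inv bs bx.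
    exists w; first by rewrite mem_rcons in_cons wd orbT.
    have [_ ws _] := fparent_some Hw.
    by rewrite step_parent_old // !index_sl.
  exists v; first by rewrite mem_rcons mem_head.
  split; first exact: step_parent_new.
  apply: index_cat_lt => //.
  by move: bl; rewrite mem_l => /andP[].
- exact: step_parent_monotone.
Qed.

Lemma fchildren_step r : fchildren e ((s ++ l) ++ r) v = [set n | n \in l].
Proof.
have sl_nil : s ++ l != [::] by case: (d).
apply/setP => n; rewrite !inE; case: (boolP (n \in l)) => nl.
  by rewrite (fparent_cat _ sl_nil (step_parent_new nl)) eqxx andbT !mem_cat nl !orbT.
apply/negbTE/andP => -[_ /eqP Hn].
have nx := fparent_neq_root (etrans (ohead_cat _ sl_nil) head_sl) Hn.
case: (boolP (n \in s)) => ns.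
  have [w wd [Hw _]] := bfs_parent inv ns nx.
  move: Hn; rewrite -catA (fparent_cat _ s_nil Hw) => -[wv].
  by move: v_notin_d; rewrite -wv wd.
have [env _ _] := fparent_some Hn.
by move: nl; rewrite mem_l e_sym env ns.
Qed.

End Step.

Lemma bfs_run_inv s q out : bfs_run (free_policy e) s q out ->
  forall d, s = d ++ q -> bfs_inv d q -> bfs_inv out [::].
Proof.
elim=> [s0 d ->|v q0 s0 l out0 Hl _ IH d Es] inv; first by rewrite cats0.
apply: IH (rcons d v) _ _; first by rewrite Es cat_rcons -catA.
by apply: bfs_inv_step inv _; rewrite -Es.
Qed.

Lemma bfs_inv_total d :
  (forall y z : T, connect e y z) -> bfs_inv d [::] -> forall n, n \in d.
Proof.
move=> e_conn inv n.
have cl : closed e (mem d).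
  apply: (intro_closed (sym_connect_sym e_sym)) => w u ewu wd.
  by have := bfs_closed inv wd ewu; rewrite cats0.
case: d inv cl => [|y d'] inv cl; first by have := bfs_head inv.
by rewrite -(closed_connect cl (e_conn y n)) mem_head.
Qed.

End BfsTree.

Section SigmaTree.
Variables (T : finType) (e : rel T).
Hypothesis e_sym : symmetric e.
Variables (sigma : seq T) (x : T).
Hypotheses (sigma_inv : bfs_inv e x sigma [::]) (sigma_total : forall n, n \in sigma).

Local Notation pos u := (index u sigma).

Let sigma_head : ohead sigma = Some x.
Proof. by have := bfs_head sigma_inv; rewrite cats0. Qed.

Let sigma_mono : parent_monotone e sigma.
Proof. by have := bfs_mono sigma_inv; rewrite cats0. Qed.

Let sigma_parent b : b != x ->
  exists2 w, fparent e sigma b = Some w & pos w < pos b.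
Proof.
move=> bx; have := bfs_parent sigma_inv; rewrite cats0 => /(_ b (sigma_total b) bx).
by case=> w _ [Hw lt_wb]; exists w.
Qed.

Lemma pos_inj u w : pos u = pos w -> u = w.
Proof. exact: index_inj. Qed.

Lemma pos_root : pos x = 0.
Proof. by case: (sigma) sigma_head => // y t [->]; rewrite /= eqxx. Qed.

Lemma fparent_first n u w : fparent e sigma n = Some u -> e n w -> pos u <= pos w.
Proof.
rewrite /fparent; case: ifP => // _ Hu enw.
exact: ohead_filter_index Hu enw (sigma_total w).
Qed.

Lemma fparent_exists n w : n != x -> e n w -> exists u, fparent e sigma n = Some u.
Proof.
move=> nx enw; rewrite /fparent /Defs.froot sigma_head (inj_eq Some_inj) eq_sym.
by rewrite (negbTE nx); apply: ohead_filter_has enw (sigma_total w).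
Qed.

(* [discovered p] is the set of vertices already visited when the BFS
   producing [sigma] dequeues the vertex at position [p]. *)
Definition discovered p n :=
  (n == x) || (if fparent e sigma n is Some u then pos u < p else false).

Lemma discovered0 n : discovered 0 n = (n == x).
Proof. by rewrite /discovered; case: (fparent e sigma n) => [u|]; rewrite ?ltn0 orbF. Qed.

Lemma discovered_root p : discovered p x.
Proof. by rewrite /discovered eqxx. Qed.

Lemma discovered_pos p y : pos y <= p -> discovered p y.
Proof.
move=> le_yp; rewrite /discovered; case: (eqVneq y x) => //= yx.
by have [w -> lt_wy] := sigma_parent yx; apply: leq_trans le_yp.
Qed.

Lemma discovered_mono p p' n : p <= p' -> discovered p n -> discovered p' n.
Proof.
move=> le_pp'; rewrite /discovered; case: (fparent e sigma n) => // u.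
by case: (n == x) => //= /leq_trans; apply.
Qed.

Lemma discovered_succ z n :
  discovered (pos z).+1 n = discovered (pos z) n || (fparent e sigma n == Some z).
Proof.
rewrite /discovered; case: (fparent e sigma n) => [u|]; last by rewrite !orbF.
rewrite ltnS leq_eqVlt (inj_eq Some_inj).
have -> : (pos u == pos z) = (u == z) by apply/eqP/eqP => [/pos_inj|->].
by case: (n == x); case: (u == z); rewrite /= ?orbT ?orbF.
Qed.

Lemma fparent_undiscovered z n :
  (e z n && ~~ discovered (pos z) n) = (fparent e sigma n == Some z).
Proof.
apply/idP/eqP => [/andP[ezn]|Hn].
  rewrite /discovered negb_or => /andP[nx]; rewrite e_sym in ezn.
  have [u Hu] := fparent_exists nx ezn.
  rewrite Hu -leqNgt => le_zu; congr Some; apply: pos_inj.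
  by apply/eqP; rewrite eqn_leq le_zu (fparent_first Hu ezn).
have [enz _ _] := fparent_some Hn.
by rewrite e_sym enz /discovered (negbTE (fparent_neq_root sigma_head Hn)) Hn ltnn.
Qed.

Lemma fchildren_sigma z : fchildren e sigma z = [set n | fparent e sigma n == Some z].
Proof. by apply/setP => n; rewrite !inE sigma_total. Qed.

Lemma leaf_childless u n : ~~ finternal e sigma u -> fparent e sigma n != Some u.
Proof.
rewrite /finternal negb_or negbK => /andP[_ /eqP no_child]; apply/eqP => Hn.
have : n \in fchildren e sigma u by rewrite fchildren_sigma inE Hn.
by rewrite no_child inE.
Qed.

Lemma fparent_lt n u : fparent e sigma n = Some u -> pos u < pos n.
Proof.
move=> Hn; have [w Hw lt_wn] := sigma_parent (fparent_neq_root sigma_head Hn).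
by move: Hn; rewrite Hw => -[<-].
Qed.

Lemma leaf_neighbors_discovered w n :
  ~~ finternal e sigma w -> e w n -> discovered (pos w) n.
Proof.
move=> leaf ewn; rewrite /discovered; case: (eqVneq n x) => //= nx.
rewrite e_sym in ewn; have [u Hu] := fparent_exists nx ewn.
rewrite Hu ltn_neqAle (fparent_first Hu ewn) andbT.
by apply: contra (leaf_childless n leaf) => /eqP/pos_inj <-; rewrite Hu.
Qed.

Lemma discovered_lt_children z a b :
  discovered (pos z) a -> fparent e sigma b = Some z -> pos a < pos b.
Proof.
move=> disc_a Hb; have bx := fparent_neq_root sigma_head Hb.
case/orP: disc_a => [/eqP->|].
  by rewrite pos_root lt0n; apply: contra bx => /eqP; rewrite -pos_root => /pos_inj ->.
case Ha: (fparent e sigma a) => [u|//] lt_uz.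
exact: sigma_mono (sigma_total a) (sigma_total b) Ha Hb lt_uz.
Qed.

Section Simulation.
Variable S : seq T.
Hypothesis S_closed :
  forall u z, z \in S -> finternal e sigma u -> pos u <= pos z -> u \in S.
Variable rho : seq T.
Hypotheses (rho_uniq : uniq rho) (rho_total : forall n, n \in rho).

Definition precedes a b := (b \in S) ==> (pos a < pos b).

Hypothesis rho_precedes : pairwise precedes rho.

(* The state [(s, q)] of the BFS^+ run once it has dequeued the vertices of
   [S] before position [p] of [sigma]: it has visited what the BFS producing
   [sigma] had visited at position [p], and it still has to dequeue the visited
   vertices of [S] after that position. *)
Record sim_inv p (s q : seq T) : Prop := SimInv {
  sim_visited : forall n, (n \in s) = discovered p n;
  sim_done : forall y, y \in S -> pos y < p -> y \notin q;
  sim_precedes : pairwise precedes q;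
  sim_pending : forall y, y \in S -> p <= pos y -> y \in s -> y \in q }.

Lemma sim_inv_init : sim_inv 0 [:: x] [:: x].
Proof. by split=> // n; rewrite discovered0 inE. Qed.

Definition next_in_S p z :=
  [/\ z \in S, p <= pos z & forall y, y \in S -> p <= pos y -> pos z <= pos y].

Lemma next_in_S_exists p y : y \in S -> p <= pos y -> exists z, next_in_S p z.
Proof.
move=> Sy py; pose P := [pred z | (z \in S) && (p <= pos z)].
have Py : P y by rewrite inE Sy py.
case: (arg_minnP (fun z => pos z) Py) => z /andP[Sz pz] zmin; exists z.
by split=> // y' Sy' py'; apply: zmin; rewrite inE Sy' py'.
Qed.

Lemma plus_policy_free v s l : plus_policy e rho v s l -> free_policy e v s l.
Proof.
by move=> ->; split=> [|n]; rewrite ?filter_uniq // mem_filter rho_total andbT.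
Qed.

Section NextInS.
Variables (p : nat) (z : T).
Hypothesis nz : next_in_S p z.

Lemma next_in_S_skips_leaves u : p <= pos u -> pos u < pos z -> ~~ finternal e sigma u.
Proof.
case: nz => Sz _ zmin pu uz; apply/negP => ui; have Su := S_closed Sz ui (ltnW uz).
by have := zmin u Su pu; rewrite leqNgt uz.
Qed.

Lemma discovered_next n : discovered p n = discovered (pos z) n.
Proof.
have [_ pz _] := nz; apply/idP/idP; first exact: discovered_mono.
case/orP=> [/eqP->|]; first exact: discovered_root.
case Hn: (fparent e sigma n) => [u|//] uz; rewrite /discovered Hn.
case: (ltnP (pos u) p) => [_|pu]; first by rewrite orbT.
by have := leaf_childless n (next_in_S_skips_leaves pu uz); rewrite Hn eqxx.
Qed.

Lemma next_in_queue s q : sim_inv p s q -> z \in q.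
Proof.
case: nz => Sz pz _ [visited _ _ pending]; apply: pending => //.
by rewrite visited discovered_next discovered_pos.
Qed.

Lemma sim_dequeue_other s w q : sim_inv p s (w :: q) -> w != z ->
  (forall n, e w n -> n \in s) /\ sim_inv p s q.
Proof.
case: (nz) => Sz pz zmin sinv wz; case: (sinv) => visited done sorted pending.
have zq : z \in q by have := next_in_queue sinv; rewrite in_cons eq_sym (negbTE wz).
have lt_wz : pos w < pos z.
  by move: sorted; rewrite pairwise_cons => /andP[/allP/(_ z zq)]; rewrite /precedes Sz.
have wS : w \notin S.
  apply/negP => Sw; case: (ltnP (pos w) p) => [wp|pw].
    by have := done w Sw wp; rewrite mem_head.
  by have := zmin w Sw pw; rewrite leqNgt lt_wz.
have leaf : ~~ finternal e sigma w.
  by apply: contra wS => wi; apply: S_closed Sz wi (ltnW lt_wz).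
split.
  move=> n ewn; rewrite visited discovered_next.
  exact: discovered_mono (ltnW lt_wz) (leaf_neighbors_discovered leaf ewn).
split=> //.
- by move=> y Sy yp; have := done y Sy yp; rewrite in_cons negb_or => /andP[].
- by move: sorted; rewrite pairwise_cons => /andP[].
- move=> y Sy py ys; have := pending y Sy py ys; rewrite in_cons => /orP[/eqP yw|//].
  by move: wS; rewrite -yw Sy.
Qed.

Lemma sim_dequeue_next s q l :
  sim_inv p s (z :: q) -> z \notin q -> {subset q <= s} -> plus_policy e rho z s l ->
  [set n | n \in l] = fchildren e sigma z /\ sim_inv (pos z).+1 (s ++ l) (q ++ l).
Proof.
case: (nz) => Sz pz zmin [visited done sorted pending] zq qs Hl.
have mem_l n : (n \in l) = (fparent e sigma n == Some z).
  by rewrite Hl mem_filter rho_total andbT visited discovered_next fparent_undiscovered.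
split; first by apply/setP => n; rewrite fchildren_sigma !inE mem_l.
split.
- by move=> n; rewrite mem_cat visited discovered_next mem_l discovered_succ.
- move=> y Sy; rewrite ltnS => yz; rewrite mem_cat negb_or; apply/andP; split.
    case: (ltnP (pos y) p) => [yp|py].
      by have := done y Sy yp; rewrite in_cons negb_or => /andP[].
    suff -> : y = z by [].
    by apply: pos_inj; apply/eqP; rewrite eqn_leq yz zmin.
  by rewrite mem_l; apply: contraTN yz => /eqP/fparent_lt; rewrite -ltnNge.
- have pl : pairwise precedes l by rewrite Hl; apply: pairwise_filter.
  move: sorted; rewrite pairwise_cat pairwise_cons pl andbT => /andP[_ ->].
  rewrite andbT; apply/allrelP => a b aq bl; apply/implyP => _.
  apply: (@discovered_lt_children z); last by apply/eqP; rewrite -mem_l.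
  by rewrite -discovered_next -visited qs.
- move=> y Sy zy; rewrite !mem_cat => /orP[ys|->]; last by rewrite orbT.
  have := pending y Sy (leq_trans pz (ltnW zy)) ys; rewrite in_cons => /orP[/eqP yz|->//].
  by move: zy; rewrite yz ltnn.
Qed.

End NextInS.

Lemma plus_run_fchildren s q out : bfs_run (plus_policy e rho) s q out ->
  forall d p, s = d ++ q -> bfs_inv e x d q -> sim_inv p s q ->
  forall y, y \in S -> p <= pos y -> fchildren e sigma y = fchildren e out y.
Proof.
elim=> [s0|w q0 s0 l out0 Hl run IH] d p Es inv sinv y Sy py;
  have [z nz] := next_in_S_exists Sy py; first by have := next_in_queue nz sinv.
have Hfree : free_policy e w (d ++ w :: q0) l by rewrite -Es; apply: plus_policy_free.
have inv' := bfs_inv_step e_sym inv Hfree.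
have Es' : s0 ++ l = rcons d w ++ (q0 ++ l) by rewrite Es cat_rcons -catA.
case: (eqVneq w z) => [wz|wz]; last first.
  have [closed_w sinv'] := sim_dequeue_other nz sinv wz.
  have l0 : l = [::].
    rewrite Hl (@eq_in_filter _ _ pred0) ?filter_pred0 // => n _ /=.
    by apply/negbTE; rewrite negb_and negbK; case: (boolP (e w n)) => //= /closed_w.
  move: IH inv' Es'; rewrite l0 !cats0 => IH inv' Es'.
  exact: IH _ _ Es' inv' sinv' y Sy py.
subst w; have [Sz pz zmin] := nz.
have zq0 : z \notin q0.
  by have := bfs_uniq inv; rewrite cat_uniq => /and3P[_ _ /andP[]].
have qs : {subset q0 <= s0} by move=> a aq; rewrite Es mem_cat in_cons aq !orbT.
have [ch sinv'] := sim_dequeue_next nz sinv zq0 qs Hl.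
case: (leqP (pos y) (pos z)) => yz; last exact: IH _ _ Es' inv' sinv' y Sy yz.
have -> : y = z by apply: pos_inj; apply/eqP; rewrite eqn_leq yz zmin.
have [r ->] := bfs_run_prefix run.
by rewrite Es (fchildren_step e_sym inv Hfree) ch.
Qed.

End Simulation.
End SigmaTree.

Section FirstInternal.
Variables (T : finType) (e : rel T) (sigma : seq T) (k : nat).
Hypothesis sigma_total : forall n, n \in sigma.
Local Notation S := (first_internal e sigma k).

Lemma first_internal_head : S != [::] -> ohead S = ohead sigma.
Proof.
case: sigma => [|y t]; first by rewrite /first_internal.
have yi : finternal e (y :: t) y by rewrite /finternal /Defs.froot /= eqxx.
by rewrite /first_internal /= yi; case: k.
Qed.

Lemma first_internal_closed u z :
  z \in S -> finternal e sigma u -> index u sigma <= index z sigma -> u \in S.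
Proof.
rewrite /first_internal => zS ui uz; have := mem_take zS.
rewrite in_take ?mem_filter ?ui ?sigma_total // => /andP[zi _].
exact: leq_ltn_trans (index_filter_le _ _ ui zi uz) (index_ltn zS).
Qed.

Lemma first_internal_sorted :
  uniq sigma -> pairwise (fun a b => index a sigma < index b sigma) S.
Proof.
move=> us; apply: subseq_pairwise (uniq_pairwise_index us).
exact: subseq_trans (take_subseq _ _) (filter_subseq _ _).
Qed.

End FirstInternal.

Lemma prefix_precedes (T : finType) (sigma S rho : seq T) :
  uniq rho -> prefix S rho -> pairwise (fun a b => index a sigma < index b sigma) S ->
  pairwise (precedes sigma S) rho.
Proof.
move=> u_rho /prefixP[r E]; move: u_rho; rewrite {rho}E cat_uniq pairwise_cat.
move=> /and3P[_ /hasPn disj _] sorted.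
apply/and3P; split.
- apply/allrelP => a b _ br; apply/implyP => bS.
  by have := disj b br; rewrite bS.
- by apply: sub_pairwise sorted => a b lt_ab; rewrite /precedes lt_ab implybT.
- case: r disj => [|y r] // disj; apply/(pairwiseP y) => i j _ hj _.
  by rewrite /precedes (negbTE (disj _ (mem_nth y hj))).
Qed.

Theorem lemma4p6 (T : finType) (e : rel T)
    (e_sym : symmetric e) (e_irr : irreflexive e)
    (e_conn : forall x y : T, connect e x y)
    (sigma : seq T) (Hsigma : is_bfs_ordering e sigma)
    (k : nat) (rho tau : seq T)
    (Hrho : is_ordering rho)
    (Hpre : prefix (first_internal e sigma k) rho)
    (Htau : is_bfsplus e rho tau) :
  forall v : T, v \in first_internal e sigma k ->
    fchildren e sigma v = fchildren e tau v.
Proof.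
move=> v Hv; have [x run_sigma] := Hsigma; have [rho_uniq rho_total] := Hrho.
have inv := bfs_run_inv e_sym run_sigma (d := [::]) erefl (bfs_inv_init e x).
have total := bfs_inv_total e_sym e_conn inv.
have [us hs] : uniq sigma /\ ohead sigma = Some x.
  by case: inv; rewrite cats0 => us hs _ _ _.
have S_nil : first_internal e sigma k != [::] by apply: contraTneq Hv => ->.
have [x' [rest [Erho run_tau]]] := Htau.
have [x'x] : Some x' = Some x.
  by rewrite -hs -(first_internal_head S_nil) -(ohead_prefix Hpre S_nil) Erho.
subst x'.
have rho_precedes := prefix_precedes rho_uniq Hpre (first_internal_sorted e k us).
apply: (plus_run_fchildren e_sym inv total (first_internal_closed total)
  rho_uniq rho_total rho_precedes run_tau (d := [::]) (p := 0) erefl (bfs_inv_init e x))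
  => //.
exact: sim_inv_init.
Qed.
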